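(* Let $d\ge2$ and $\rho\ge1$. For every $\rho$-balanced rectangle $R\subseteq\mathbb Z^d$ and every $X\subseteq R$ we have $p^R(X)\ge\frac{p(X)}{3d\rho}\cdot\frac{|R\setminus X|}{|R|}$.
   Context: For $X\subseteq\mathbb Z^d$, $\partial X$ is the set of ordered pairs $(m,n)$ with $m\in X$, $n\notin X$, $n-m=\pm e_j$ for a standard basis vector $e_j$; $p(X):=|\partial X|$. For $R\subseteq\mathbb Z^d$, $\partial^RX:=\partial X\cap R^2$ and $p^R(X):=|\partial^RX|$. A rectangle is $\prod_{j=1}^d\{a_j,\dots,b_j\}$ with side lengths $b_j-a_j+1$; it is $\rho$-balanced if the ratio of any two side lengths is at most $\rho$. *)

From HB Require Import structures.
From mathcomp Require Import all_boot all_order all_algebra.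
Set Implicit Arguments. Unset Strict Implicit. Unset Printing Implicit Defensive.
Import Order.TTheory GRing.Theory Num.Theory.
Local Open Scope ring_scope.

Definition point (d : nat) := {ffun 'I_d -> int}.

Definition unit_vec (d : nat) (j : 'I_d) : point d :=
  [ffun i => ((i == j) : nat)%:Z].

Definition adjacent (d : nat) (m n : point d) : bool :=
  [exists j : 'I_d, (n - m == unit_vec j) || (n - m == - unit_vec j)].

Definition boundary (d : nat) (X : pred (point d)) : pred (point d * point d) :=
  fun mn => [&& X mn.1, ~~ X mn.2 & adjacent mn.1 mn.2].

Definition boundary_in (d : nat) (R X : pred (point d)) : pred (point d * point d) :=
  fun mn => [&& boundary X mn, R mn.1 & R mn.2].

Definition is_card (T : eqType) (A : pred T) (n : nat) : Prop :=
  exists s : seq T, [/\ uniq s, s =i A & size s = n].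

Definition rect (d : nat) (a b : 'I_d -> int) : pred (point d) :=
  fun m => [forall j, (a j <= m j <= b j)%R].

Definition side (d : nat) (a b : 'I_d -> int) (j : 'I_d) : int := b j - a j + 1.

Definition balanced (F : realFieldType) (d : nat) (rho : F) (a b : 'I_d -> int) : Prop :=
  forall i j : 'I_d, (side a b i)%:~R <= rho * (side a b j)%:~R.

From HB Require Import structures.
From mathcomp Require Import all_boot all_order all_algebra zify ring lra.
Set Implicit Arguments. Unset Strict Implicit. Unset Printing Implicit Defensive.
Import Order.TTheory GRing.Theory Num.Theory.

(* Translate the rectangle to a box of side lengths [L_j].  A boundary edge of
   [X] leaving the box starts at a point of [X] on one of the [2d] faces, so it
   suffices to bound the number [f] of points of [X] on a face [{x_j = v}] by
   the numbers [P_u] of boundary edges of [X] in direction [u] inside the box.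
   Pair such a point [x] with a point [y] of the box outside [X] and walk from
   [x] to [y], first along [e_j] and then changing the other coordinates one at
   a time: the walk crosses the boundary of [X].  Summed over all pairs
   [(x, y)], the first legs make [P_j |R|] crossings and, by a mixing
   involution, the [u]-legs make [L_u P_u |R| / L_j] crossings.  Hence
   [f |R \ X| <= P_j |R| + (|R| / L_j) sum_(u <> j) L_u P_u <= rho |R| sum_u P_u],
   and summing over the faces
   [p(X) |R \ X| <= p^R(X) |R \ X| + 2 d rho |R| p^R(X) <= 3 d rho |R| p^R(X)]. *)

Lemma is_card_inj_image (T : finType) (E : eqType) (f : T -> E) (Q : pred T)
    (B : pred E) n :
  injective f -> (forall t, Q t -> B (f t)) ->
  (forall e, B e -> exists2 t, Q t & f t = e) ->
  is_card B n -> n = #|Q|.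
Proof.
move=> f_inj QB BQ [s [s_uniq sB <-]].
rewrite cardE -(size_map f); apply/perm_size/uniq_perm => //.
  by rewrite map_inj_uniq // enum_uniq.
move=> e; rewrite sB; apply/idP/mapP => [/BQ [t Qt <-]|[t]].
  by exists t; rewrite ?mem_enum.
by rewrite mem_enum => /QB ? ->.
Qed.

Lemma is_card_inj_le (T : finType) (E : eqType) (g : T -> E) (Q : pred T)
    (B : pred E) n :
  {in Q &, injective g} -> (forall t, Q t -> B (g t)) -> is_card B n -> #|Q| <= n.
Proof.
move=> g_inj QB [s [s_uniq sB <-]].
rewrite cardE -(size_map g); apply: uniq_leq_size.
  by rewrite map_inj_in_uniq ?enum_uniq // => x y; rewrite !mem_enum; apply: g_inj.
by move=> e /mapP [t]; rewrite mem_enum sB => /QB ? ->.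
Qed.

Lemma is_card_cover (E : eqType) (B B1 : pred E) (s : seq E) n n1 :
  is_card B n -> is_card B1 n1 -> (forall e, B e -> B1 e \/ e \in s) ->
  n <= n1 + size s.
Proof.
move=> [t [t_uniq tB <-]] [t1 [t1_uniq t1B <-]] cover.
rewrite -size_cat; apply: uniq_leq_size => // e.
by rewrite tB mem_cat t1B => /cover [] ?; apply/orP; [left|right].
Qed.

Lemma sum_nat_of_bool (T : finType) (P b : pred T) :
  \sum_(i | P i) (b i : nat) = #|[pred i | P i && b i]|.
Proof. by rewrite -sum1_card big_mkcondr /=; apply: eq_big. Qed.

Section BoolJumps.
Variable f : nat -> bool.

Definition jumps (x y : nat) := \sum_(x <= c < y) (f c (+) f c.+1).

Lemma bool_le_jumps_interval x k :
  f x <= f (x + k) + jumps x (x + k) /\ f (x + k) <= f x + jumps x (x + k).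
Proof.
rewrite /jumps; elim: k => [|k IH]; first by rewrite addn0 big_geq // addn0.
rewrite addnS big_nat_recr ?leq_addr //=; move: IH.
set S := \sum_(_ <= _ < _) _.
by case: (f x) (f (x + k)) (f (x + k).+1) => [] [] [] /=; lia.
Qed.

Lemma jumps_sub x y m : x <= y <= m -> jumps x y <= jumps 0 m.
Proof.
case/andP=> le_xy le_ym; rewrite /jumps (@big_cat_nat _ _ _ x 0 m) //=; last first.
  exact: leq_trans le_ym.
by rewrite (@big_cat_nat _ _ _ y x m) //= addnCA leq_addr.
Qed.

Lemma bool_le_jumps m x y : x < m -> y < m -> f x <= f y + jumps 0 m.-1.
Proof.
move=> lt_xm lt_ym.
have le_pred z : z < m -> z <= m.-1 by rewrite -ltnS; case: m {lt_xm lt_ym}.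
wlog le_xy : x y lt_xm lt_ym / x <= y.
  move=> wlog_le; case: (leqP x y) => [|/ltnW le_yx]; first exact: wlog_le.
  have [_ le_y] := bool_le_jumps_interval y (x - y); rewrite subnKC // in le_y.
  by rewrite (leq_trans le_y) // leq_add2l jumps_sub // le_yx le_pred.
have [le_x _] := bool_le_jumps_interval x (y - x); rewrite subnKC // in le_x.
by rewrite (leq_trans le_x) // leq_add2l jumps_sub // le_xy le_pred.
Qed.

End BoolJumps.

(* The box [{0..L_1-1} x ... x {0..L_d-1}]; coordinates are taken in
   ['I_K.+1] only to get a finite type, and [L_le] makes [inord c] faithful
   for every admissible coordinate [c]. *)
Section Box.
Variables (n K : nat) (L : 'I_n.+1 -> nat).
Hypothesis L_le : forall k, L k <= K.+1.
Local Notation grid := {ffun 'I_n.+1 -> 'I_K.+1}.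
Variable A : pred grid.

Definition in_box (z : grid) := [forall k, z k < L k].

Definition set_coord (z : grid) (i : 'I_n.+1) (c : nat) : grid :=
  [ffun k => if k == i then inord c else z k].

Definition mix (S : pred 'I_n.+1) (x y : grid) : grid :=
  [ffun k => if S k then y k else x k].

Lemma in_box_lt z i : in_box z -> z i < L i.
Proof. by move/forallP. Qed.

Lemma lt_L_le_K i c : c < L i -> c <= K.
Proof. by move=> lt_c; rewrite -ltnS (leq_trans lt_c). Qed.

Lemma set_coord_id z i : set_coord z i (z i) = z.
Proof. by apply/ffunP=> k; rewrite ffunE; case: eqP => // ->; rewrite inord_val. Qed.

Lemma set_coord_set_coord z i c c' : set_coord (set_coord z i c) i c' = set_coord z i c'.
Proof. by apply/ffunP=> k; rewrite !ffunE; case: eqP. Qed.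

Lemma set_coord_at z i c : c <= K -> set_coord z i c i = c :> nat.
Proof. by move=> le_cK; rewrite ffunE eqxx inordK. Qed.

Lemma in_box_set_coord z i c : in_box z -> c < L i -> in_box (set_coord z i c).
Proof.
move=> /forallP z_box lt_c; apply/forallP=> k; rewrite ffunE.
case: eqP => [->|_]; last exact: z_box.
by rewrite inordK // ltnS (lt_L_le_K lt_c).
Qed.

Lemma in_box_mix S x y : in_box (mix S x y) && in_box (mix S y x) = in_box x && in_box y.
Proof.
apply/andP/andP => [[/forallP xy_box /forallP yx_box]|[/forallP x_box /forallP y_box]].
  by split; apply/forallP=> k; move: (xy_box k) (yx_box k); rewrite !ffunE; case: (S k).
by split; apply/forallP=> k; rewrite ffunE; case: (S k).
Qed.

Lemma mixK S x y : mix S (mix S x y) (mix S y x) = x.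
Proof. by apply/ffunP=> k; rewrite !ffunE; case: (S k). Qed.

Definition line_jumps i z := jumps (fun c => A (set_coord z i c)) 0 (L i).-1.

Lemma bool_le_line_jumps i z c1 c2 : c1 < L i -> c2 < L i ->
  A (set_coord z i c1) <= A (set_coord z i c2) + line_jumps i z.
Proof. exact: bool_le_jumps. Qed.

Definition jump i z := A z (+) A (set_coord z i (z i).+1).

Definition edge_jumps i := \sum_(z | in_box z && ((z i).+1 < L i)) jump i z.

Lemma line_jumpsE i z : line_jumps i z = \sum_(0 <= c < (L i).-1) jump i (set_coord z i c).
Proof.
apply: eq_big_nat => c /andP [_ lt_c].
have le_cK : c <= K by apply: (@lt_L_le_K i); rewrite (leq_trans lt_c) // leq_pred.
by rewrite /jump set_coord_at // set_coord_set_coord.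
Qed.

Lemma sum_nat_pred1 x m g : \sum_(0 <= c < m) (if x == c then g else 0) = if x < m then g else 0.
Proof.
elim: m => [|m IH]; first by rewrite big_geq.
rewrite big_nat_recr //= IH ltnS.
by case: ltngtP; rewrite ?addn0 ?add0n.
Qed.

Lemma sum_box_slices i m (G : grid -> nat) :
  \sum_(z | in_box z && (z i < m)) G z =
  \sum_(0 <= c < m) \sum_(z | in_box z && (z i == c :> nat)) G z.
Proof.
under [RHS]eq_bigr do rewrite big_mkcond /=.
rewrite exchange_big /= [LHS]big_mkcond /=; apply: eq_bigr => z _.
transitivity (if z i < m then (if in_box z then G z else 0) else 0).
  by case: in_box; case: (_ < _).
rewrite -sum_nat_pred1; apply: eq_bigr => c _.
by case: in_box; case: eqP.
Qed.

Lemma sum_slice_reindex i c c' (G : grid -> nat) : c < L i -> c' < L i ->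
  \sum_(z | in_box z && (z i == c' :> nat)) G z =
  \sum_(z | in_box z && (z i == c :> nat)) G (set_coord z i c').
Proof.
move=> lt_c lt_c'; have le_cK := lt_L_le_K lt_c; have le_c'K := lt_L_le_K lt_c'.
rewrite (reindex_onto (fun z => set_coord z i c') (fun z => set_coord z i c)) /=; last first.
  by move=> z /andP [_ /eqP <-]; rewrite set_coord_set_coord set_coord_id.
apply: eq_bigl => z; rewrite set_coord_set_coord set_coord_at // eqxx andbT.
apply/andP/andP => [[z_box /eqP zc]|[z_box /eqP <-]].
  rewrite -zc set_coord_at // -(set_coord_set_coord z i c').
  by split=> //; apply: in_box_set_coord.
by split; [apply: in_box_set_coord | rewrite set_coord_id].
Qed.

Lemma sum_box_set_coord i c (G : grid -> nat) : c < L i ->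
  \sum_(z | in_box z) G (set_coord z i c) =
  L i * \sum_(z | in_box z && (z i == c :> nat)) G z.
Proof.
move=> lt_c; rewrite (eq_bigl (fun z => in_box z && (z i < L i))); last first.
  by move=> z; case z_box: (in_box z); rewrite //= (in_box_lt _ z_box).
rewrite sum_box_slices.
rewrite (eq_big_nat _ _ (F2 := fun=> \sum_(z | in_box z && (z i == c :> nat)) G z)).
  by rewrite sum_nat_const_nat subn0.
move=> c' /andP [_ lt_c']; rewrite (sum_slice_reindex _ lt_c lt_c').
by apply: eq_bigr => z /andP [_ /eqP <-]; rewrite set_coord_set_coord set_coord_id.
Qed.

Lemma edge_jumps_slices i :
  edge_jumps i = \sum_(0 <= c < (L i).-1) \sum_(z | in_box z && (z i == c :> nat)) jump i z.
Proof. by rewrite -sum_box_slices; apply: eq_bigl => z; rewrite -ltn_predRL. Qed.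

Lemma sum_line_jumps i : \sum_(z | in_box z) line_jumps i z = L i * edge_jumps i.
Proof.
under eq_bigr do rewrite line_jumpsE.
rewrite exchange_big edge_jumps_slices big_distrr /=.
apply: eq_big_nat => c /andP [_ lt_c]; apply: sum_box_set_coord.
by rewrite (leq_trans lt_c) // leq_pred.
Qed.

Lemma sum_slice_line_jumps j v : v < L j ->
  \sum_(x | in_box x && (x j == v :> nat)) line_jumps j x = edge_jumps j.
Proof.
move=> lt_v; under eq_bigr do rewrite line_jumpsE.
rewrite exchange_big edge_jumps_slices /=.
apply: eq_big_nat => c /andP [_ lt_c]; rewrite (@sum_slice_reindex j v c _ lt_v) //.
by rewrite (leq_trans lt_c) // leq_pred.
Qed.

(* [(x, y) |-> (mix S x y, mix S y x)] is an involution of the pairs of box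
   points which, as [S j] holds, preserves the slice condition on [y]. *)
Lemma sum_mix (S : pred 'I_n.+1) j v (G : grid -> nat) : S j ->
  \sum_(x | in_box x && (x j == v :> nat)) \sum_(y | in_box y) G (mix S x y)
  = (\sum_(z | in_box z) G z) * (\sum_(z | in_box z && (z j == v :> nat)) 1).
Proof.
move=> Sj; rewrite pair_big_dep /=.
pose tau (p : grid * grid) := (mix S p.1 p.2, mix S p.2 p.1).
have tauK : involutive tau by move=> [x y]; rewrite /tau /= !mixK.
rewrite (reindex_inj (inv_inj tauK)) /=.
transitivity (\sum_(p | in_box p.1 && (in_box p.2 && (p.2 j == v :> nat))) G p.1).
  apply: eq_big => [[x y]|[x y] _] /=; last by rewrite mixK.
  have -> : mix S x y j = y j by rewrite ffunE Sj.
  by rewrite -andbA (andbC (_ == _)) andbA in_box_mix -andbA.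
rewrite -(pair_big in_box (fun z => in_box z && (z j == v :> nat)) (fun z _ => G z)) /=.
rewrite big_distrl /=; apply: eq_bigr => z _.
by rewrite big_distrr /=; apply: eq_bigr => y _; rewrite muln1.
Qed.

Definition hybrid (j : 'I_n.+1) (u : nat) x y :=
  mix (fun k : 'I_n.+1 => (k < u) || (k == j)) x y.

Lemma in_box_hybrid j u x y : in_box x -> in_box y -> in_box (hybrid j u x y).
Proof.
by move=> x_box y_box; move: (in_box_mix (fun k => (k < u) || (k == j)) x y);
  rewrite x_box y_box => /andP [].
Qed.

Lemma hybrid0 j x y : hybrid j 0 x y = set_coord x j (y j).
Proof. by apply/ffunP=> k; rewrite !ffunE; case: eqP => [->|]; rewrite ?inord_val. Qed.

Lemma hybrid_full j x y : hybrid j n.+1 x y = y.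
Proof. by apply/ffunP=> k; rewrite !ffunE ltn_ord. Qed.

Lemma hybridS_eq j x y : hybrid j (j : nat).+1 x y = hybrid j j x y.
Proof.
apply/ffunP=> k; rewrite !ffunE ltnS leq_eqVlt.
by case: (k =P j) => [->|/eqP nkj]; rewrite ?eqxx ?orbT // (inj_eq val_inj) (negbTE nkj).
Qed.

Lemma hybridS (j : 'I_n.+1) u x y : u < n.+1 -> u != j :> nat ->
  hybrid j u.+1 x y = set_coord (hybrid j u x y) (inord u) (y (inord u)).
Proof.
move=> lt_u nuj; apply/ffunP=> k; rewrite !ffunE ltnS leq_eqVlt.
case: (k =P inord u) => [->|/eqP nku]; first by rewrite inordK // eqxx inord_val.
suff -> : (k == u :> nat) = false by [].
by apply/negbTE; rewrite -(inordK lt_u) (inj_eq val_inj).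
Qed.

(* Walk from [x] to [y]: first along direction [j], then one coordinate
   [u <> j] at a time; each leg is a segment of a line parallel to an axis. *)
Lemma bool_le_hybrid j x y m : in_box x -> in_box y -> m <= n.+1 ->
  A x <= line_jumps j x
         + \sum_(0 <= u < m | u != j :> nat) line_jumps (inord u) (hybrid j u x y)
         + A (hybrid j m x y).
Proof.
move=> x_box y_box; elim: m => [|m IH] lt_m.
  rewrite big_geq // addn0 hybrid0 addnC -{1}(set_coord_id x j).
  by apply: bool_le_line_jumps; apply: in_box_lt.
apply: (leq_trans (IH (ltnW lt_m))).
rewrite [in X in _ <= X]big_mkcond big_nat_recr //= -big_mkcond /= -!addnA !leq_add2l.
case: eqP => [->|/eqP nmj]; first by rewrite hybridS_eq.
rewrite hybridS // addnC -{1}(set_coord_id (hybrid j m x y) (inord m)).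
apply: bool_le_line_jumps; apply: in_box_lt => //; exact: in_box_hybrid.
Qed.

Lemma bool_le_sum_line_jumps j x y : in_box x -> in_box y ->
  A x && ~~ A y <=
  line_jumps j x + \sum_(0 <= u < n.+1 | u != j :> nat) line_jumps (inord u) (hybrid j u x y).
Proof.
move=> x_box y_box; have := bool_le_hybrid j x_box y_box (leqnn n.+1).
by rewrite hybrid_full; case: (A x); case: (A y); rewrite /= ?addn0 ?addn1.
Qed.

Definition box_card := \sum_(z | in_box z) 1.
Definition box_compl := \sum_(z | in_box z) (~~ A z : nat).
Definition face_card j v := \sum_(x | in_box x && (x j == v :> nat)) (A x : nat).

Lemma face_card_bound j v : v < L j ->
  face_card j v * box_compl * L j <=
  edge_jumps j * box_card * L j + box_card * \sum_(u : 'I_n.+1 | u != j) L u * edge_jumps u.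
Proof.
move=> lt_v; set slice := \sum_(z | in_box z && (z j == v :> nat)) 1.
have slice_card : slice * L j = box_card.
  by rewrite /box_card /slice mulnC -(sum_box_set_coord (fun=> 1) lt_v).
set others := \sum_(u : 'I_n.+1 | u != j) L u * edge_jumps u.
suff pair_bound : face_card j v * box_compl <= edge_jumps j * box_card + others * slice.
  apply: leq_trans (leq_mul pair_bound (leqnn (L j))) _.
  by rewrite mulnDl -(mulnA others) slice_card (mulnC others).
have -> : face_card j v * box_compl = \sum_(x | in_box x && (x j == v :> nat))
    \sum_(y | in_box y) (A x && ~~ A y : nat).
  rewrite /face_card /box_compl big_distrl /=; apply: eq_bigr => x _.
  by rewrite big_distrr /=; apply: eq_bigr => y _; rewrite mulnb.
apply: (@leq_trans (\sum_(x | in_box x && (x j == v :> nat)) \sum_(y | in_box y)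
    (line_jumps j x + \sum_(0 <= u < n.+1 | u != j :> nat)
       line_jumps (inord u) (hybrid j u x y)))).
  apply: leq_sum => x /andP [x_box _]; apply: leq_sum => y y_box.
  exact: bool_le_sum_line_jumps.
under eq_bigr do rewrite big_split /=.
rewrite big_split /= leq_add //.
  rewrite -(sum_slice_line_jumps lt_v) /box_card big_distrl /=.
  by apply/eq_leq/eq_bigr => x _; rewrite big_distrr /=; apply: eq_bigr => y _; rewrite muln1.
rewrite big_distrl /=; under eq_bigr do rewrite exchange_big /=.
rewrite exchange_big /= big_mkord; apply/eq_leq/eq_bigr => u nuj.
rewrite (@sum_mix (fun k => (k < u) || (k == j)) j v) ?eqxx ?orbT //.
by rewrite inord_val sum_line_jumps.
Qed.

Lemma box_card_gt0 : (forall k, 0 < L k) -> 0 < box_card.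
Proof.
move=> L_gt0; rewrite /box_card (bigD1 [ffun=> ord0]) //.
by apply/forallP => k; rewrite ffunE.
Qed.

Lemma box_compl_le : box_compl <= box_card.
Proof. by apply: leq_sum => z _; apply: leq_b1. Qed.

End Box.

Section Balanced.
Local Open Scope ring_scope.
Variables (F : realFieldType) (n : nat) (rho : F) (L P : 'I_n.+1 -> nat).
Hypotheses (rho_ge1 : 1 <= rho) (L_gt0 : forall k, (0 < L k)%N).
Hypothesis L_balanced : forall i j, (L i)%:R <= rho * (L j)%:R.

Lemma balanced_face_bound (N Y f : nat) j :
  (f * Y * L j <= P j * N * L j + N * \sum_(u | u != j) L u * P u)%N ->
  f%:R * Y%:R <= rho * N%:R * \sum_u (P u)%:R.
Proof.
move=> face_le; have L_pos : 0 < (L j)%:R :> F by rewrite ltr0n.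
rewrite -(ler_pM2r L_pos); move: face_le; rewrite -(ler_nat F) !natrD !natrM natr_sum.
move/le_trans; apply.
have others : \sum_(u | u != j) ((L u * P u)%:R : F) <=
    rho * (L j)%:R * \sum_(u | u != j) (P u)%:R.
  by rewrite mulr_sumr; apply: ler_sum => u _; rewrite natrM ler_wpM2r.
have own : (P j)%:R * N%:R * (L j)%:R <= rho * ((P j)%:R * N%:R * (L j)%:R) :> F.
  by rewrite ler_peMl // !mulr_ge0.
apply: le_trans (lerD own (ler_wpM2l (ler0n F N) others)) _.
by rewrite [X in _ <= _ * X * _](bigD1 j) //=; lra.
Qed.

(* [top j] and [bot j] stand for the numbers of points of [X] on the two faces
   orthogonal to [e_j], [P j] for the boundary edges of [X] in direction [j]
   inside the box, [N] and [Y] for [|R|] and [|R \ X|]. *)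
Lemma balanced_isoperimetry (N Y pX pRX : nat) (top bot : 'I_n.+1 -> nat) :
  (0 < N)%N -> (Y <= N)%N ->
  (\sum_u P u <= pRX)%N -> (pX <= pRX + \sum_j (top j + bot j))%N ->
  (forall j, top j * Y * L j <= P j * N * L j + N * \sum_(u | u != j) L u * P u)%N ->
  (forall j, bot j * Y * L j <= P j * N * L j + N * \sum_(u | u != j) L u * P u)%N ->
  pX%:R / (3 * n.+1%:R * rho) * (Y%:R / N%:R) <= pRX%:R :> F.
Proof.
move=> N_gt0 le_YN le_PpRX le_pX top_le bot_le.
have rho_gt0 : 0 < rho by apply: lt_le_trans rho_ge1.
set Pt : F := \sum_u (P u)%:R; set S : F := (\sum_j (top j + bot j))%:R.
have faces : S * Y%:R <= 2 * n.+1%:R * rho * N%:R * Pt.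
  rewrite /S natr_sum mulr_suml.
  apply: (@le_trans _ _ (\sum_(j < n.+1) 2 * rho * N%:R * Pt)).
    apply: ler_sum => j _; rewrite natrD mulrDl.
    move: (balanced_face_bound (top_le j)) (balanced_face_bound (bot_le j)).
    rewrite -/Pt; lra.
  by rewrite sumr_const card_ord -mulr_natr; lra.
have le_Pt : Pt <= pRX%:R by rewrite /Pt -natr_sum ler_nat.
have le_pX' : pX%:R <= pRX%:R + S :> F by rewrite -natrD ler_nat.
have le_YN' : Y%:R <= N%:R :> F by rewrite ler_nat.
have N_gt0' : 0 < N%:R :> F by rewrite ltr0n.
have d_ge1 : 1 <= n.+1%:R :> F by rewrite ler1n.
rewrite mulf_div ler_pdivrMr; last by rewrite !mulr_gt0 // ltr0n.
set y : F := Y%:R; set nn : F := N%:R; set dd : F := n.+1%:R; set p : F := pRX%:R.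
have dr_ge1 : 1 <= dd * rho by apply: mulr_ege1.
have Y_ge0 : 0 <= y by rewrite ler0n.
have p_ge0 : 0 <= p by rewrite ler0n.
have e1 : pX%:R * y <= p * y + S * y by rewrite -mulrDl ler_wpM2r.
have e2 : p * y <= p * nn by rewrite ler_wpM2l.
have e3 : S * y <= 2 * dd * rho * nn * p.
  by apply: (le_trans faces); rewrite ler_wpM2l // !mulr_ge0 // ?ler0n // ltW.
have e4 : p * nn <= dd * rho * nn * p.
  by have := ler_wpM2r (mulr_ge0 p_ge0 (ltW N_gt0')) dr_ge1; lra.
apply: le_trans (le_trans e1 (lerD e2 e3)) _.
by apply: le_trans (lerD e4 (lexx _)) _; lra.
Qed.

End Balanced.

Local Open Scope ring_scope.

Lemma unit_vec_inj d : injective (@unit_vec d).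
Proof.
move=> u u' /(congr1 (fun m : point d => m u)); rewrite !ffunE eqxx.
by case: eqP.
Qed.

Lemma unit_vec_neq_opp d (u u' : 'I_d) : unit_vec u <> - unit_vec u'.
Proof.
move=> /(congr1 (fun m : point d => m u)); rewrite !ffunE eqxx.
by case: eqP.
Qed.

Section Rectangle.
Variables (n : nat) (a b : 'I_n.+1 -> int).
Hypothesis le_ab : forall j, a j <= b j.

Definition side_len k := `|side a b k|%N.
Definition side_max := (\max_(k < n.+1) side_len k)%N.
Local Notation grid := {ffun 'I_n.+1 -> 'I_side_max.+1}.

Definition embed (z : grid) : point n.+1 := [ffun k => a k + (z k : nat)%:Z].

Lemma side_lenE k : (side_len k)%:Z = side a b k.
Proof. by rewrite /side_len gez0_abs // /side; have := le_ab k; lia. Qed.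

Lemma side_len_gt0 k : (0 < side_len k)%N.
Proof. by rewrite -ltz_nat side_lenE /side; have := le_ab k; lia. Qed.

Lemma side_len_le k : (side_len k <= side_max.+1)%N.
Proof. exact: leq_trans (leq_bigmax k) (leqnSn _). Qed.

Lemma rect_embed z : rect a b (embed z) = in_box side_len z.
Proof.
apply: eq_forallb => k; rewrite ffunE -ltz_nat side_lenE /side.
by apply/idP/idP; lia.
Qed.

Lemma embed_inj : injective embed.
Proof.
move=> z z' /ffunP e; apply/ffunP => k; apply: val_inj => /=.
by have := e k; rewrite !ffunE; lia.
Qed.

Lemma rect_embedP m : rect a b m -> exists2 z, in_box side_len z & embed z = m.
Proof.
move=> /forallP m_in.
have lt_m k : (`|m k - a k| < side_len k)%N.
  by rewrite -ltz_nat side_lenE gez0_abs /side; have := m_in k; lia.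
exists [ffun k => inord `|m k - a k|].
  by apply/forallP => k; rewrite ffunE inordK // (leq_trans (lt_m k) (side_len_le k)).
apply/ffunP => k; rewrite !ffunE inordK ?(leq_trans (lt_m k) (side_len_le k)) //.
have m_ge : 0 <= m k - a k by have := m_in k; lia.
by rewrite (gez0_abs m_ge) addrC subrK.
Qed.

Lemma embed_set_coord_succ (z : grid) u : ((z u).+1 <= side_max)%N ->
  embed (set_coord z u (z u).+1) - embed z = unit_vec u.
Proof.
move=> lt_zu; apply/ffunP => k; rewrite !ffunE.
by case: eqP => [->|_]; rewrite ?inordK //; lia.
Qed.

Lemma is_card_rect nR : is_card (rect a b) nR -> nR = box_card side_max side_len.
Proof.
move=> /(is_card_inj_image (Q := in_box side_len) embed_inj) ->.
- by rewrite /box_card sum1dep_card; apply: eq_card => z; rewrite inE.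
- by move=> z; rewrite rect_embed.
- by move=> m /rect_embedP.
Qed.

Variable X : pred (point n.+1).

Definition gridX (z : grid) := in_box side_len z && X (embed z).

Lemma is_card_rect_compl nRX :
  is_card (fun m => rect a b m && ~~ X m) nRX -> nRX = box_compl side_len gridX.
Proof.
move=> /(is_card_inj_image (Q := [pred z | in_box side_len z && ~~ gridX z]) embed_inj) ->.
- by rewrite /box_compl sum_nat_of_bool.
- by move=> z /andP [z_box]; rewrite /gridX rect_embed z_box.
- move=> m /andP [/rect_embedP [z z_box <-] Xm].
  by exists z; rewrite // inE /gridX z_box Xm.
Qed.

Definition jumping (p : 'I_n.+1 * grid) :=
  [&& in_box side_len p.2, ((p.2 p.1).+1 < side_len p.1)%N & jump gridX p.1 p.2].

Definition jump_edge (p : 'I_n.+1 * grid) :=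
  let z' := set_coord p.2 p.1 (p.2 p.1).+1 in
  if gridX p.2 then (embed p.2, embed z') else (embed z', embed p.2).

Lemma sum_edge_jumps : (\sum_u edge_jumps side_len gridX u = #|jumping|)%N.
Proof.
rewrite /edge_jumps pair_big_dep /= sum_nat_of_bool; apply: eq_card => p.
by rewrite !inE -andbA.
Qed.

Lemma jump_edge_sub p : jumping p ->
  (jump_edge p).2 - (jump_edge p).1 = if gridX p.2 then unit_vec p.1 else - unit_vec p.1.
Proof.
case: p => u z /and3P [_ /= lt_zu _].
have le_zu : ((z u).+1 <= side_max)%N by rewrite -ltnS (leq_trans lt_zu (side_len_le u)).
rewrite /jump_edge /=; case: gridX => /=; first exact: embed_set_coord_succ.
by rewrite -opprB embed_set_coord_succ.
Qed.

Lemma jump_edge_inj : {in jumping &, injective jump_edge}.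
Proof.
move=> [u z] [u' w] jp jq e.
have := jump_edge_sub jq; rewrite -e jump_edge_sub //=.
move: e; rewrite /jump_edge /=; case Xz: (gridX z); case Xw: (gridX w) => /= e.
- by move=> /unit_vec_inj eu; case: e => /embed_inj <-; rewrite eu.
- by move/unit_vec_neq_opp.
- by move=> /esym /unit_vec_neq_opp.
- by move=> /oppr_inj /unit_vec_inj eu; case: e => _ /embed_inj <-; rewrite eu.
Qed.

Lemma jump_edge_boundary p : jumping p -> boundary_in (rect a b) X (jump_edge p).
Proof.
move=> jp; have diff := jump_edge_sub jp.
case: p jp diff => u z /and3P [/= z_box lt_zu]; rewrite /jump /jump_edge /=.
set z' := set_coord z u (z u).+1.
have z'_box : in_box side_len z' := in_box_set_coord side_len_le z_box lt_zu.
have gridXE w : in_box side_len w -> X (embed w) = gridX w by rewrite /gridX => ->.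
case Xz: (gridX z) => /= Xz' diff;
  rewrite /boundary_in /boundary /adjacent /= !rect_embed z_box z'_box !gridXE // Xz Xz' /=;
  by rewrite andbT; apply/existsP; exists u; rewrite diff eqxx ?orbT.
Qed.

Lemma sum_edge_jumps_le pRX :
  is_card (boundary_in (rect a b) X) pRX -> (\sum_u edge_jumps side_len gridX u <= pRX)%N.
Proof.
rewrite sum_edge_jumps; apply: (is_card_inj_le jump_edge_inj).
exact: jump_edge_boundary.
Qed.

Lemma rect_exit_up m m' j :
  rect a b m -> ~~ rect a b m' -> m' - m = unit_vec j -> m j = b j.
Proof.
move=> /forallP m_in /forallPn [k out] /ffunP/(_ k); rewrite !ffunE.
move: out (m_in k) (m_in j); rewrite negb_and -!ltNge.
by case: (k =P j) => [->|_] /= /orP [] out; lia.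
Qed.

Lemma rect_exit_down m m' j :
  rect a b m -> ~~ rect a b m' -> m' - m = - unit_vec j -> m j = a j.
Proof.
move=> /forallP m_in /forallPn [k out] /ffunP/(_ k); rewrite !ffunE.
move: out (m_in k) (m_in j); rewrite negb_and -!ltNge.
by case: (k =P j) => [->|_] /= /orP [] out; lia.
Qed.

Definition face_points (f : 'I_n.+1 -> nat) :=
  [pred p : 'I_n.+1 * grid | gridX p.2 && (p.2 p.1 == f p.1 :> nat)].

Definition exit_edges (f : 'I_n.+1 -> nat) (dir : 'I_n.+1 -> point n.+1) :=
  [seq (embed p.2, embed p.2 + dir p.1) | p <- enum (face_points f)].

Lemma size_exit_edges f dir :
  size (exit_edges f dir) = (\sum_j face_card side_len gridX j (f j))%N.
Proof.
rewrite size_map -cardE.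
transitivity (\sum_(p : 'I_n.+1 * grid) (face_points f p : nat))%N.
  by rewrite sum_nat_of_bool; apply: eq_card.
rewrite [RHS](eq_bigr (fun j => \sum_z (face_points f (j, z) : nat))%N).
  by rewrite pair_bigA; apply: eq_bigr => -[].
move=> j _; rewrite /face_card big_mkcond /=; apply: eq_bigr => z _.
by rewrite /face_points /gridX /=; case: in_box; case: (_ == _); case: X.
Qed.

Lemma boundary_exit e : {subset X <= rect a b} -> boundary X e -> ~~ rect a b e.2 ->
  e \in exit_edges (fun j => (side_len j).-1) (@unit_vec _)
        ++ exit_edges (fun=> 0%N) (fun j => - unit_vec j).
Proof.
case: e => m m' X_rect /and3P [/= Xm _ /existsP [j /orP [] /eqP step]] out;
  have [z z_box ez] := rect_embedP (X_rect _ Xm);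
  have := side_lenE j; rewrite mem_cat /side => len_j.
- have := rect_exit_up (X_rect _ Xm) out step; rewrite -ez ffunE => zj.
  apply/orP; left; apply/mapP; exists (j, z); last by rewrite /= ez -step addrC subrK.
  by rewrite mem_enum inE /= /gridX z_box ez Xm /=; apply/eqP; lia.
- have := rect_exit_down (X_rect _ Xm) out step; rewrite -ez ffunE => zj.
  apply/orP; right; apply/mapP; exists (j, z); last by rewrite /= ez -step addrC subrK.
  by rewrite mem_enum inE /= /gridX z_box ez Xm /=; apply/eqP; lia.
Qed.

Lemma boundary_le_exits pX pRX : {subset X <= rect a b} ->
  is_card (boundary X) pX -> is_card (boundary_in (rect a b) X) pRX ->
  (pX <= pRX + \sum_j (face_card side_len gridX j (side_len j).-1
                       + face_card side_len gridX j 0))%N.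
Proof.
move=> X_rect cpX cpRX; rewrite big_split /= -(size_exit_edges (fun j => (side_len j).-1) (@unit_vec _)).
rewrite -(size_exit_edges (fun=> 0%N) (fun j => - unit_vec j)) -size_cat.
apply: (is_card_cover cpX cpRX) => -[m m'] bd.
case: (boolP (rect a b m')) => [m'_in|out]; last by right; apply: boundary_exit.
left; rewrite /boundary_in bd m'_in andbT /=.
by case/and3P: bd => /X_rect.
Qed.

End Rectangle.



Theorem lemma4p4 (F : realFieldType) (d : nat) (rho : F) (a b : 'I_d -> int)
    (X : pred (point d)) (nR nRX pX pRX : nat) :
  (2 <= d)%N -> 1 <= rho ->
  (forall j, a j <= b j) -> balanced rho a b ->
  {subset X <= rect a b} ->
  is_card (rect a b) nR ->
  is_card (fun m => rect a b m && ~~ X m) nRX ->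
  is_card (boundary X) pX ->
  is_card (boundary_in (rect a b) X) pRX ->
  pX%:R / (3 * d%:R * rho) * (nRX%:R / nR%:R) <= pRX%:R :> F.
Proof.
case: d a b X => [//|n] a b X _ rho_ge1 le_ab bal X_rect cR cRX cpX cpRX.
have L_gt0 := side_len_gt0 le_ab.
rewrite (is_card_rect le_ab cR) (is_card_rect_compl le_ab cRX).
apply: (balanced_isoperimetry rho_ge1 L_gt0 _ _ (box_compl_le _ _) (sum_edge_jumps_le le_ab cpRX)
          (boundary_le_exits le_ab X_rect cpX cpRX)).
- by move=> i j; have := bal i j; rewrite -!(side_lenE le_ab).
- exact: box_card_gt0.
- by move=> j; apply: (face_card_bound (side_len_le a b)); rewrite prednK.
- by move=> j; apply: (face_card_bound (side_len_le a b)).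
Qed.
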